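(* Let $e,\ell\geq 2$ be integers and let $|\boldsymbol{\lambda},\mathbf{s}\rangle$ be any charged $\ell$-partition. Then the first good vertical $e$-strip of $|\boldsymbol{\lambda},\mathbf{s}\rangle$ is addable. Equivalently, the map $\tilde c_{(1)}$ (adding the first good vertical $e$-strip) is well defined.
   Context: A charged $\ell$-partition $|\boldsymbol{\lambda},\mathbf{s}\rangle$ is an $\ell$-tuple of partitions $\boldsymbol{\lambda}=(\lambda^1,\dots,\lambda^\ell)$ together with $\mathbf{s}=(s_1,\dots,s_\ell)\in\mathbb{Z}^\ell$. A box is a triple $(a,b,j)$ (row $a\geq1$, column $b\geq1$, component $j\in\{1,\dots,\ell\}$); $(a,b,j)\in\boldsymbol{\lambda}$ means it lies in the Young diagram of $\lambda^j$. The content of $\gamma=(a,b,j)$ is $c(\gamma)=b-a+s_j$. Let $\mathcal{W}(\boldsymbol{\lambda},\mathbf{s})$ be the set of boxes $(a,b,j)\notin\boldsymbol{\lambda}$ such that either $b=1$, or $b\geq2$ and $(a,b-1,j)\in\boldsymbol{\lambda}$ (the boxes immediately to the right of each row, rows of length $0$ included). A (level $\ell$) vertical $e$-strip is a sequence of $e$ boxes $\gamma_1=(a_1,b_1,j_1),\dots,\gamma_e=(a_e,b_e,j_e)$ with no $i$ such that $a_{i+1}=a_i$ and $j_{i+1}=j_i$; it is admissible if $c(\gamma_i)=c(\gamma_{i+1})+1$ for all $1\le i<e$ and $j_i\geq j_{i'}$ for all $i<i'$. Let $\mathcal{V}(\boldsymbol{\lambda},\mathbf{s})$ be the set of admissible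 vertical $e$-strips all of whose boxes lie in $\mathcal{W}(\boldsymbol{\lambda},\mathbf{s})$. A vertical $e$-strip $X$ is addable if $X\cap\boldsymbol{\lambda}=\emptyset$ and $\boldsymbol{\lambda}\sqcup X$ is still an $\ell$-tuple of partitions. Order boxes by $\gamma>\gamma'$ iff $c(\gamma)>c(\gamma')$, or $c(\gamma)=c(\gamma')$ and $j<j'$ (where $j,j'$ are the components of $\gamma,\gamma'$); order $e$-tuples of boxes lexicographically with respect to this order; this is a total order on $\mathcal{V}(\boldsymbol{\lambda},\mathbf{s})$. The first good vertical $e$-strip is the maximal element $X_1$ of $\mathcal{V}(\boldsymbol{\lambda},\mathbf{s})$. *)

From mathcomp Require Import all_boot all_order all_algebra.
Set Implicit Arguments. Unset Strict Implicit. Unset Printing Implicit Defensive.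
Import Order.TTheory GRing.Theory Num.Theory.

(* A partition: a weakly decreasing finite sequence of positive integers
   (its row lengths; row a, 1-indexed, has length nth 0 p a.-1). *)
Definition is_partition (p : seq nat) : bool :=
  sorted geq p && all (fun x => 0 < x) p.

(* An l-partition: lam : 'I_l -> seq nat, component j+1 of the paper is the
   ordinal j (0-indexed; the order on components is preserved).
   Charge s : 'I_l -> int. *)

Definition box (l : nat) := (nat * nat * 'I_l)%type.
Definition brow l (g : box l) : nat := g.1.1.
Definition bcol l (g : box l) : nat := g.1.2.
Definition bcomp l (g : box l) : 'I_l := g.2.

Definition content l (s : 'I_l -> int) (g : box l) : int :=
  ((bcol g)%:Z - (brow g)%:Z + s (bcomp g))%R.

Definition in_diag l (lam : 'I_l -> seq nat) (g : box l) : bool :=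
  [&& 1 <= brow g, 1 <= bcol g & bcol g <= nth 0 (lam (bcomp g)) (brow g).-1].

Definition inW l (lam : 'I_l -> seq nat) (g : box l) : bool :=
  [&& 1 <= brow g, 1 <= bcol g, ~~ in_diag lam g &
      (bcol g == 1) || ((2 <= bcol g) && in_diag lam (brow g, (bcol g).-1, bcomp g))].

Definition strip_step l (s : 'I_l -> int) (g g' : box l) : bool :=
  ~~ ((brow g == brow g') && (bcomp g == bcomp g')) &&
  (content s g == (content s g' + 1)%R).

Definition admissible_strip l (s : 'I_l -> int) (e : nat) (X : seq (box l)) : bool :=
  [&& size X == e, sorted (strip_step s) X &
      pairwise (fun g g' : box l => bcomp g' <= bcomp g) X].

Definition inV l (lam : 'I_l -> seq nat) (s : 'I_l -> int) (e : nat)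
  (X : seq (box l)) : bool :=
  admissible_strip s e X && all (inW lam) X.

Definition box_gt l (s : 'I_l -> int) (g g' : box l) : bool :=
  (content s g' < content s g)%R ||
  ((content s g == content s g') && (bcomp g < bcomp g')).

Fixpoint lex_gt l (s : 'I_l -> int) (X Y : seq (box l)) : bool :=
  match X, Y with
  | x :: X', y :: Y' => box_gt s x y || ((x == y) && lex_gt s X' Y')
  | _, _ => false
  end.

Definition first_good l (lam : 'I_l -> seq nat) (s : 'I_l -> int) (e : nat)
  (X : seq (box l)) : Prop :=
  inV lam s e X /\ forall Y, inV lam s e Y -> Y = X \/ lex_gt s X Y.

Definition addable l (lam : 'I_l -> seq nat) (X : seq (box l)) : Prop :=
  (forall g, g \in X -> [&& 1 <= brow g, 1 <= bcol g & ~~ in_diag lam g]) /\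
  exists mu : 'I_l -> seq nat,
    (forall j, is_partition (mu j)) /\
    forall g : box l, in_diag mu g = in_diag lam g || (g \in X).

From mathcomp Require Import all_boot all_order all_algebra.
From mathcomp Require Import zify.
Import Order.TTheory GRing.Theory Num.Theory.

(* Every box of W is the box [wbox j a] just right of some row a of some
   component j, and within a component the content of [wbox j a] strictly
   decreases with a.  Hence the order on boxes is total on W, the
   lexicographic order is a strict total order on V, and only finitely many
   strips of V lie above a given one: V has a greatest element X.
   If X contains [wbox j (a+1)] while rows a and a+1 of lam^j have the same
   length, then X also contains [wbox j a]: otherwise substituting it for the
   predecessor of [wbox j (a+1)] in X (or putting it in front of X and
   dropping the last box) would give a larger strip of V.  So adding X never
   makes a row longer than the row above it, and lam with X added is again an
   l-tuple of partitions. *)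

Set Implicit Arguments.
Unset Strict Implicit.
Unset Printing Implicit Defensive.

Section Greatest.

Variables (T : eqType) (r : rel T).
Hypothesis r_trans : transitive r.

Lemma seq_greatest x0 (C : seq T) :
  {in x0 :: C &, forall x y, [\/ x = y, r x y | r y x]} ->
  exists2 m, m \in x0 :: C & {in x0 :: C, forall x, x = m \/ r m x}.
Proof.
elim: C x0 => [|c C IH] x0 r_total.
  by exists x0 => [|x]; rewrite ?mem_head // inE => /eqP ->; left.
have sub : {subset c :: C <= x0 :: c :: C} by move=> x xC; rewrite inE xC orbT.
have [m mC m_max] : exists2 m, m \in c :: C & {in c :: C, forall x, x = m \/ r m x}.
  by apply: IH => x y /sub xC /sub yC; apply: r_total.
case: (r_total x0 m (mem_head _ _) (sub _ mC)) => [x0m|x0m|mx0].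
- exists m => [|x]; first exact: sub.
  by rewrite inE => /predU1P[->|/m_max]; [left|].
- exists x0 => [|x]; first exact: mem_head.
  rewrite inE => /predU1P[->|/m_max[->|mx]]; [by left|by right|].
  by right; apply: r_trans mx.
- exists m => [|x]; first exact: sub.
  by rewrite inE => /predU1P[->|/m_max]; [right|].
Qed.

Lemma exists_greatest (P : pred T) x0 (D : seq T) :
  {in P &, forall x y, [\/ x = y, r x y | r y x]} -> P x0 ->
  {in P, forall x, r x x0 -> x \in D} ->
  exists2 m, P m & {in P, forall x, x = m \/ r m x}.
Proof.
move=> r_total Px0 bounded.
pose C := [seq x <- D | P x && r x x0].
have PC : {in x0 :: C, forall x, P x}.
  by move=> x; rewrite inE mem_filter => /predU1P[->|/andP[/andP[]]].
have [m mC m_max] := seq_greatest (fun x y xC yC => r_total x y (PC x xC) (PC y yC)).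
exists m => [|x Px]; first exact: PC.
case: (r_total x x0 Px Px0) => [->|xx0|x0x]; first exact: m_max (mem_head _ _).
  by apply: m_max; rewrite inE mem_filter (Px : P x) xx0 bounded ?orbT.
by right; case: (m_max x0 (mem_head _ _)) => [<-|mx0] //; apply: r_trans mx0 x0x.
Qed.

End Greatest.

Fixpoint seqs_over (T : Type) (D : seq T) (n : nat) : seq (seq T) :=
  if n is n'.+1 then [seq x :: t | x <- D, t <- seqs_over D n'] else [:: [::]].

Lemma mem_seqs_over (T : eqType) (D Y : seq T) :
  {subset Y <= D} -> Y \in seqs_over D (size Y).
Proof.
elim: Y => [|y Y IH] //= YD.
apply: (allpairs_f (fun x t => x :: t)); first by apply: YD; rewrite mem_head.
by apply: IH => x xY; apply: YD; rewrite inE xY orbT.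
Qed.

Lemma sorted_geq_nth (p : seq nat) i k : sorted geq p -> i <= k -> nth 0 p k <= nth 0 p i.
Proof.
move=> p_sorted le_ik; case: (ltnP k (size p)) => [lt_kp|]; last by move/(nth_default 0) ->.
apply: (sorted_leq_nth (rev_trans leq_trans) leqnn 0 p_sorted) => //; rewrite inE.
exact: leq_ltn_trans lt_kp.
Qed.

Lemma nth_filter_gt0 (p : seq nat) i :
  sorted geq p -> nth 0 [seq x <- p | 0 < x] i = nth 0 p i.
Proof.
elim: p i => [|x p IH] i //= p_sorted.
case: (posnP x) => [x0|x_gt0]; last by case: i => //= i; apply/IH/(path_sorted p_sorted).
have p0 : {in p, forall y, y = 0}.
  by move=> y /(allP (order_path_min (rev_trans leq_trans) p_sorted)); rewrite x0 leqn0 => /eqP.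
have -> : [seq y <- p | 0 < y] = [::].
  by apply/eqP; rewrite -[_ == _]negbK -has_filter; apply/hasPn => y /p0 ->.
case: i => [|i] /=; first by rewrite x0.
by case: (ltnP i (size p)) => [/(mem_nth 0)/p0|/(nth_default 0)] ->.
Qed.

Definition rows_partition (f : nat -> nat) (N : nat) : seq nat := [seq x <- mkseq f N | 0 < x].

Section RowsPartition.

Variables (f : nat -> nat) (N : nat).
Hypothesis f_noninc : forall i, f i.+1 <= f i.

Let sorted_mkseq : sorted geq (mkseq f N).
Proof.
rewrite sorted_map; apply: sub_sorted (iota_sorted 0 N) => i j le_ij /=.
exact: (@homo_leq _ f (fun a b => b <= a) leqnn (fun b a c h1 h2 => leq_trans h2 h1)).
Qed.

Lemma rows_partition_is_partition : is_partition (rows_partition f N).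
Proof.
by rewrite /is_partition filter_all andbT sorted_filter //; apply: rev_trans leq_trans.
Qed.

Lemma nth_rows_partition i : (forall i, N <= i -> f i = 0) -> nth 0 (rows_partition f N) i = f i.
Proof.
move=> f_eq0; rewrite nth_filter_gt0 //.
by case: (ltnP i N) => [lt_iN|le_Ni]; [rewrite nth_mkseq | rewrite nth_default ?size_mkseq ?f_eq0].
Qed.

End RowsPartition.

Lemma sorted_map_iota (T : Type) (r : rel T) (f : nat -> T) m n :
  (forall i, r (f i) (f i.+1)) -> sorted r [seq f i | i <- iota m n].
Proof.
move=> r_f; rewrite sorted_map; case: n => //= n.
by elim: n m => //= n IH m; rewrite r_f IH.
Qed.

Lemma sorted_cat_cons_replace (T : eqType) (r : rel T) P x y A :
  {in P, forall z, r z x -> r z y} -> {in A, forall z, r x z -> r y z} ->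
  sorted r (P ++ x :: A) -> sorted r (P ++ y :: A).
Proof.
move=> P_r A_r; rewrite !sorted_cat_cons => /andP[sorted_Px path_xA]; apply/andP; split.
  case: P P_r sorted_Px => [//|p P] P_r /=; rewrite !rcons_path => /andP[-> /P_r -> //].
  exact: mem_last.
case: A A_r path_xA => [//|a A] A_r /= /andP[/A_r -> //]; exact: mem_head.
Qed.

Section Boxes.

Variables (l : nat) (lam : 'I_l -> seq nat) (s : 'I_l -> int).

Definition wbox (j : 'I_l) (a : nat) : box l := (a, nth 0 (lam j) a.-1 + 1, j).

Lemma inW_wbox g : inW lam g = (0 < brow g) && (g == wbox (bcomp g) (brow g)).
Proof.
case: g => [[a b] j].
by rewrite /inW /in_diag /wbox /brow /bcol /bcomp /= !xpair_eqE !eqxx andbT; apply/idP/idP; lia.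
Qed.

Lemma inW_eq_wbox g : inW lam g -> g = wbox (bcomp g) (brow g).
Proof. by rewrite inW_wbox => /andP[_ /eqP]. Qed.

Lemma wbox_inW j a : 0 < a -> inW lam (wbox j a).
Proof. by move=> a_gt0; rewrite inW_wbox a_gt0 /=. Qed.

Lemma content_wbox j a :
  content s (wbox j a) = ((nth 0 (lam j) a.-1 + 1)%N%:Z - a%:Z + s j)%R.
Proof. by []. Qed.

Lemma strip_stepW x y : inW lam x -> inW lam y ->
  strip_step s x y = (content s x == content s y + 1)%R.
Proof.
move=> xW yW; apply/andP/eqP => [[_ /eqP] //|c_xy]; split; last exact/eqP.
apply/negP => /andP[/eqP same_row /eqP same_comp].
have x_eq_y : x = y by rewrite (inW_eq_wbox xW) (inW_eq_wbox yW) same_row same_comp.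
by move: c_xy; rewrite x_eq_y; lia.
Qed.

Lemma box_gt_trans : transitive (box_gt s).
Proof. by move=> y x z; rewrite /box_gt; lia. Qed.

Lemma lex_gt_trans : transitive (lex_gt s).
Proof.
move=> Y X Z; elim: X Y Z => [|x X IH] [|y Y] [|z Z] //=.
move=> /orP[xy|/andP[/eqP <- XY]] /orP[yz|/andP[/eqP <- YZ]].
- by rewrite (box_gt_trans xy yz).
- by rewrite xy.
- by rewrite yz.
- by rewrite eqxx (IH _ _ XY YZ) orbT.
Qed.

Lemma lex_gt_irr X : lex_gt s X X = false.
Proof. by elim: X => //= x X ->; rewrite /box_gt ltxx ltnn !eqxx. Qed.

Lemma lex_gt_cat P X Y : lex_gt s (P ++ X) (P ++ Y) = lex_gt s X Y.
Proof. by elim: P => //= p P ->; rewrite /box_gt ltxx ltnn !eqxx. Qed.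

Lemma admissible_stripE e X : admissible_strip s e X =
  [&& size X == e, sorted (strip_step s) X & sorted [rel g g' : box l | bcomp g' <= bcomp g] X].
Proof. by rewrite /admissible_strip -sorted_pairwise // => ? ? ? /[swap]; apply: leq_trans. Qed.

Lemma strip_content_ge y Y g : path (strip_step s) y Y -> g \in y :: Y ->
  (content s y - (size Y)%:Z <= content s g)%R.
Proof.
elim: Y y => [|y' Y IH] y /=; first by move=> _; rewrite inE => /eqP ->; lia.
move=> /andP[/andP[_ /eqP c_yy'] sorted_Y]; rewrite inE => /predU1P[->|/(IH _ sorted_Y)]; lia.
Qed.

Lemma lex_gt_head_content y Y y0 Y0 :
  lex_gt s (y :: Y) (y0 :: Y0) -> (content s y0 <= content s y)%R.
Proof. by rewrite /= /box_gt => /orP[/orP[/ltW //|/andP[/eqP -> _]]|/andP[/eqP -> _]]. Qed.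

Hypothesis lam_partition : forall j, is_partition (lam j).

Let lam_sorted j : sorted geq (lam j).
Proof. by case/andP: (lam_partition j). Qed.

Lemma content_wbox_ltn j a b : 0 < a -> a < b -> (content s (wbox j b) < content s (wbox j a))%R.
Proof.
move=> a_gt0 lt_ab; rewrite !content_wbox.
have := @sorted_geq_nth _ a.-1 b.-1 (lam_sorted j); lia.
Qed.

Lemma inW_content_inj x y : inW lam x -> inW lam y ->
  bcomp x = bcomp y -> content s x = content s y -> x = y.
Proof.
move=> xW yW same_comp same_content.
move: (xW) (yW) same_content; rewrite !inW_wbox => /andP[x_gt0 /eqP ->] /andP[y_gt0 /eqP ->].
rewrite same_comp; case: (ltngtP (brow x) (brow y)) => [lt_xy|lt_yx|-> //].
- by have := @content_wbox_ltn (bcomp y) _ _ x_gt0 lt_xy; lia.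
- by have := @content_wbox_ltn (bcomp y) _ _ y_gt0 lt_yx; lia.
Qed.

Lemma box_gt_totalW x y : inW lam x -> inW lam y ->
  [\/ x = y, box_gt s x y | box_gt s y x].
Proof.
move=> xW yW; rewrite /box_gt.
case: (ltgtP (content s x) (content s y)) => [|| same_content] /=;
  [by constructor 3 | by constructor 2 |].
case: (ltngtP (bcomp x) (bcomp y)) => [|| /val_inj same_comp];
  [by constructor 2 | by constructor 3 |].
by constructor 1; apply: inW_content_inj.
Qed.

Lemma lex_gt_totalW X Y : size X = size Y -> all (inW lam) X -> all (inW lam) Y ->
  [\/ X = Y, lex_gt s X Y | lex_gt s Y X].
Proof.
elim: X Y => [|x X IH] [|y Y] //=; first by constructor 1.
move=> [same_size] /andP[xW XW] /andP[yW YW].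
case: (box_gt_totalW xW yW) => [<-|xy|yx]; last 2 first.
- by constructor 2; rewrite xy.
- by constructor 3; rewrite yx.
case: (IH Y same_size XW YW) => [<-|XY|YX].
- by constructor 1.
- by constructor 2; rewrite eqxx XY orbT.
- by constructor 3; rewrite eqxx YX orbT.
Qed.

Lemma inW_content_bounded (C : int) :
  exists D : seq (box l), forall g, inW lam g -> (C <= content s g)%R -> g \in D.
Proof.
pose M := \max_(j < l) (nth 0 (lam j) 0 + `|s j|%N).
exists [seq wbox j a | j <- enum 'I_l, a <- iota 0 (M + `|C|%N + 2)].
move=> g gW; rewrite (inW_eq_wbox gW) content_wbox => C_le.
apply: allpairs_f; first by rewrite mem_enum.
have := leq_bigmax (F := fun j : 'I_l => nth 0 (lam j) 0 + `|s j|%N) (bcomp g).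
have := @sorted_geq_nth _ 0 (brow g).-1 (lam_sorted (bcomp g)) (leq0n _).
rewrite mem_iota -/M; lia.
Qed.

Variable e : nat.

Lemma inV_lex_bounded Y0 :
  exists D : seq (seq (box l)), {in inV lam s e, forall Y, lex_gt s Y Y0 -> Y \in D}.
Proof.
case: Y0 => [|y0 Y0]; first by exists [::] => -[].
have [D D_W] := inW_content_bounded (content s y0 - e%:Z).
exists (seqs_over D e) => -[//|y Y] /andP[].
rewrite admissible_stripE => /and3P[/eqP size_Y sorted_Y _] YW lt_Y0.
rewrite -size_Y; apply: mem_seqs_over => g gY; apply: D_W; first exact: (allP YW).
have := strip_content_ge sorted_Y gY; have := lex_gt_head_content lt_Y0.
rewrite -size_Y /=; lia.
Qed.

Lemma exists_inV : 0 < l -> exists Y, inV lam s e Y.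
Proof.
move=> l_gt0; pose j0 := Ordinal l_gt0.
pose f i := wbox j0 (size (lam j0) + i.+1).
exists [seq f i | i <- iota 0 e]; rewrite /inV admissible_stripE size_map size_iota eqxx /=.
rewrite -andbA; apply/and3P; split.
- apply: sorted_map_iota => i.
  rewrite /f strip_stepW ?wbox_inW ?addnS // !content_wbox !nth_default; lia.
- exact: sorted_map_iota.
- by apply/allP => g /mapP[i _ ->]; rewrite wbox_inW ?addnS.
Qed.

Lemma exists_first_good : 0 < l -> exists X, first_good lam s e X.
Proof.
move=> l_gt0; have [Y0 Y0V] := exists_inV l_gt0.
have [D bounded] := inV_lex_bounded Y0.
have lex_total : {in inV lam s e &, forall X Y, [\/ X = Y, lex_gt s X Y | lex_gt s Y X]}.
  move=> X Y /andP[/and3P[/eqP size_X _ _] XW] /andP[/and3P[/eqP size_Y _ _] YW].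
  by apply: lex_gt_totalW; rewrite ?size_X ?size_Y.
have [X XV X_max] := exists_greatest lex_gt_trans lex_total Y0V bounded.
by exists X; split.
Qed.

Lemma inV_replace P x y A : inV lam s e (P ++ x :: A) -> inW lam y ->
  content s y = content s x -> bcomp y <= bcomp x -> {in A, forall a, bcomp a <= bcomp y} ->
  inV lam s e (P ++ y :: A).
Proof.
rewrite /inV !admissible_stripE !size_cat /= all_cat /=.
move=> /andP[/and3P[size_X strip_X comp_X] /and3P[PW xW AW]] yW c_yx comp_yx A_comp.
rewrite size_X all_cat /= PW yW AW !andbT /=; apply/andP; split.
- by apply: sorted_cat_cons_replace strip_X => [z /(allP PW) zW|z /(allP AW) zW];
    rewrite !strip_stepW ?c_yx.
- apply: sorted_cat_cons_replace comp_X => [z _ /= /(leq_trans comp_yx) //|z zA _].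
  exact: A_comp.
Qed.

Lemma inV_cons_take x y A : inV lam s e (x :: A) -> inW lam y ->
  content s y = (content s x + 1)%R -> bcomp x <= bcomp y ->
  inV lam s e (y :: take (size A) (x :: A)).
Proof.
rewrite /inV !admissible_stripE /= size_take ltnSn.
move=> /and3P[/and3P[size_X strip_X comp_X] xW AW] yW c_yx comp_xy.
rewrite size_X yW /= -andbA; apply/and3P; split.
- by apply: take_path; rewrite /= strip_X strip_stepW ?c_yx ?eqxx.
- by apply: take_path; rewrite /= comp_X comp_xy.
- by apply/allP => z /mem_take; rewrite inE => /predU1P[->|/(allP AW)].
Qed.

Lemma first_good_max X Y : first_good lam s e X -> inV lam s e Y -> ~~ lex_gt s Y X.
Proof.
move=> [_ X_max] /X_max [->|XY]; first by rewrite lex_gt_irr.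
by apply/negP => YX; have := lex_gt_trans XY YX; rewrite lex_gt_irr.
Qed.

Lemma first_good_wbox_above X j a : first_good lam s e X -> 0 < a ->
  nth 0 (lam j) a.-1 = nth 0 (lam j) a -> wbox j a.+1 \in X -> wbox j a \in X.
Proof.
move=> fgX a_gt0 same_len gX; apply/negPn/negP => g'X.
have g'W : inW lam (wbox j a) := wbox_inW j a_gt0.
have c_g' : content s (wbox j a) = (content s (wbox j a.+1) + 1)%R.
  by rewrite !content_wbox /= -same_len; lia.
suff [Y YV] : exists2 Y, inV lam s e Y & lex_gt s Y X.
  by apply/negP: (first_good_max fgX YV).
have [XV _] := fgX; case/splitPr: gX XV g'X => P S; case/lastP: P => [|P h] XV g'X.
  exists (wbox j a :: take (size S) (wbox j a.+1 :: S)).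
    exact: inV_cons_take XV g'W c_g' _.
  by rewrite /= /box_gt c_g' ltrDl ltr01.
rewrite cat_rcons in XV g'X *.
move: (XV) => /andP[]; rewrite admissible_stripE sorted_cat_cons => /and3P[_ /andP[_ strip_h]].
rewrite sorted_cat_cons => /andP[_ /andP[comp_h comp_S]] /allP XW.
move: strip_h => /= /andP[/andP[_ /eqP c_h] _]; rewrite /= in comp_h.
have hX : h \in P ++ h :: wbox j a.+1 :: S by rewrite mem_cat mem_head orbT.
have lt_comp : j < bcomp h.
  rewrite ltn_neqAle comp_h andbT; apply: contraNneq g'X => same_comp.
  suff <- : h = wbox j a by [].
  by apply: inW_content_inj; [exact: XW | exact: g'W | exact/val_inj/esym | rewrite c_h c_g'].
exists (P ++ wbox j a :: wbox j a.+1 :: S).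
  apply: inV_replace XV g'W _ (ltnW lt_comp) _; first by rewrite c_h c_g'.
  move=> z; rewrite inE => /predU1P[-> //|zS].
  exact: (allP (order_path_min (fun _ _ _ h1 h2 => leq_trans h2 h1) comp_S)).
by rewrite lex_gt_cat /= /box_gt c_h c_g' eqxx lt_comp orbT.
Qed.

Lemma first_good_addable X : first_good lam s e X -> addable lam X.
Proof.
move=> fgX; have [/andP[_ XW] _] := fgX.
split=> [g /(allP XW)|]; first by rewrite /inW => /and4P[-> -> ->].
pose f j i := nth 0 (lam j) i + (wbox j i.+1 \in X).
pose N := \max_(g <- X) brow g.
have f_noninc j i : f j i.+1 <= f j i.
  have := sorted_geq_nth (lam_sorted j) (leqnSn i); rewrite /f.
  have [gX|] := boolP (wbox j i.+2 \in X); last by lia.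
  have [//|g'X] := boolP (wbox j i.+1 \in X); first by lia.
  suff : nth 0 (lam j) i != nth 0 (lam j) i.+1 by lia.
  apply: contraNneq g'X => same_len.
  exact: (first_good_wbox_above (a := i.+1) fgX _ same_len gX).
have f_eq0 j i : size (lam j) + N <= i -> f j i = 0.
  move=> le_i; rewrite /f nth_default; last by lia.
  apply/eqP; rewrite eqb0; apply/negP.
  move=> /(leq_bigmax_seq (F := @brow l) (P := xpredT)) /(_ isT).
  by rewrite -/N /wbox /brow /=; lia.
exists (fun j => rows_partition (f j) (size (lam j) + N)); split=> [j|[[a b] j]].
  exact: rows_partition_is_partition.
rewrite /in_diag /brow /bcol /= (nth_rows_partition (f_noninc j) _ (f_eq0 j)).
have [gX|gX] := boolP ((a, b, j) \in X).
  move: (allP XW _ gX); rewrite inW_wbox /brow /= => /andP[a_gt0 /eqP g_eq].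
  by rewrite orbT /f prednK // -g_eq gX; case: g_eq => ->; lia.
rewrite orbF; case: (posnP a) => [-> //|a_gt0]; rewrite /f prednK //.
have [wX|_] := boolP (wbox j a \in X); last by rewrite addn0.
suff : b != nth 0 (lam j) a.-1 + 1 by lia.
by apply: contraNneq gX => ->.
Qed.

End Boxes.

Theorem lemma5p8 (e l : nat) (lam : 'I_l -> seq nat) (s : 'I_l -> int) :
  2 <= e -> 2 <= l -> (forall j, is_partition (lam j)) ->
  (exists X, first_good lam s e X) /\
  (forall X, first_good lam s e X -> addable lam X).
Proof.
move=> _ l_ge2 lam_partition; split; last exact: first_good_addable.
by apply: exists_first_good; last exact: leq_trans l_ge2.
Qed.
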